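(* Let $n\ge0$ and $f:[-1,1]\to\mathbb R$. Let $\boldsymbol\gamma:\mathbb Z\to\mathbb R$ be a real sequence supported in $\{0,1,\dots,n\}$, and write its NLFT as $\overbrace{\boldsymbol\gamma}(z)=\begin{pmatrix}a(z)&b(z)\\-b^*(z)&a^*(z)\end{pmatrix}$. Suppose $\operatorname{Re}\big[b(e^{2i\theta})e^{-in\theta}\big]=f(\cos\theta)$ for all $\theta\in[0,\pi]$. Let $\psi_k:=\arctan\gamma_k\in(-\frac\pi2,\frac\pi2)$ for $k=0,\dots,n$ and $\Psi=(\psi_0,\dots,\psi_n)$. Then $\operatorname{Im}\big(u_n(\Psi,x)\big)=f(x)$ for all $x\in[-1,1]$, where $u_n(\Psi,x)$ denotes the $(1,1)$ entry of $U_n(\Psi,x)$.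
   Context: $Z=\begin{pmatrix}1&0\\0&-1\end{pmatrix}$. For $x\in[-1,1]$, $W(x):=\begin{pmatrix}x& i\sqrt{1-x^2}\\ i\sqrt{1-x^2}&x\end{pmatrix}$ and $U_n(\Psi,x):=e^{i\psi_0 Z}\prod_{k=1}^n\big(W(x)e^{i\psi_k Z}\big)$ (factors ordered with increasing $k$ left to right). For a Laurent polynomial $a$, $a^*(z):=\overline{a(1/\overline z)}$. For a compactly supported $\boldsymbol\gamma:\mathbb Z\to\mathbb C$ supported in $[m,n']$, its NLFT is $\overbrace{\boldsymbol\gamma}(z):=\prod_{k=m}^{n'}\frac{1}{\sqrt{1+|\gamma_k|^2}}\begin{pmatrix}1&\gamma_k z^k\\-\overline{\gamma_k}z^{-k}&1\end{pmatrix}$ (ordered by increasing $k$ left to right); it always has the form $\begin{pmatrix}a&b\\-b^*&a^*\end{pmatrix}$ with $a,b$ Laurent polynomials. *)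

From mathcomp Require Import all_boot all_order all_algebra.
From mathcomp Require Import complex.
From mathcomp Require Import reals trigo.
Set Implicit Arguments. Unset Strict Implicit. Unset Printing Implicit Defensive.
Import Order.TTheory GRing.Theory Num.Theory.
Local Open Scope ring_scope.
Local Open Scope complex_scope.

Section QSP.
Variable R : realType.

Definition cexpi (t : R) : R[i] := cos t +i* sin t.

Definition expiZ (psi : R) : 'M[R[i]]_2 :=
  \matrix_(i < 2, j < 2)
    if i == j then (if i == 0 then cexpi psi else cexpi (- psi)) else 0.

Definition Wmx (x : R) : 'M[R[i]]_2 :=
  \matrix_(i < 2, j < 2)
    if i == j then x%:C else 0 +i* Num.sqrt (1 - x ^+ 2).

(* U_n(Psi, x) = e^{i psi_0 Z} prod_{k=1}^n (W(x) e^{i psi_k Z}),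
   factors with increasing k from left to right *)
Definition Umx (n : nat) (Psi : nat -> R) (x : R) : 'M[R[i]]_2 :=
  foldl (fun M k => M *m (Wmx x *m expiZ (Psi k))) (expiZ (Psi 0%N)) (iota 1 n).

(* One NLFT factor  (1+|g|^2)^{-1/2} [[1, g z^k], [-conj(g) z^{-k}, 1]] *)
Definition nlft_factor (g : R[i]) (k : int) (z : R[i]) : 'M[R[i]]_2 :=
  ((Num.sqrt (1 + (complex.Re g) ^+ 2 + (complex.Im g) ^+ 2))^-1)%:C *:
  \matrix_(i < 2, j < 2)
    if i == j then 1 else if i == 0 then g * z ^ k else - (g^* * z ^ (- k)).

(* NLFT of a sequence gamma : int -> R[i] supported in [m, m + len - 1],
   evaluated at a point z (z <> 0): the ordered product over k = m, ..., m+len-1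
   (increasing k from left to right). *)
Definition nlft (gamma : int -> R[i]) (m : int) (len : nat) (z : R[i])
  : 'M[R[i]]_2 :=
  foldl (fun M (j : nat) => M *m nlft_factor (gamma (m + j%:Z)) (m + j%:Z) z)
        1%:M (iota 0 len).

End QSP.

From mathcomp Require Import all_boot all_order all_algebra.
From mathcomp Require Import complex.
From mathcomp Require Import reals trigo.
From mathcomp Require Import ring lra.
Import Order.TTheory GRing.Theory Num.Theory.
Local Open Scope ring_scope.
Local Open Scope complex_scope.
Set Implicit Arguments. Unset Strict Implicit. Unset Printing Implicit Defensive.

(* Conjugate everything by V = [[1, 1], [i, -i]].  Then V W(cos t) V^-1 = e^{itZ}
   for t in [0, pi], V e^{i psi Z} V^-1 is the real rotation by psi, and the
   NLFT factor of a real coefficient g at index k and z = e^{2it} is the rotation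
   by arctan g conjugated by e^{iktZ}.  Telescoping gives
   V U_n(Psi, cos t) = NLFT(e^{2it}) e^{intZ} V.  The right-hand factor has the
   SU(2) shape [[a, b], [-b^*, a^*]], and comparing (0,0) and (1,0) entries
   yields Im u_n = Re (b(e^{2it}) e^{-int}). *)

Section QSPasNLFT.
Variable R : realType.
Implicit Types (A B P U : 'M[R[i]]_2) (a t x : R).

Lemma matrix2P A B :
  A 0 0 = B 0 0 -> A 0 1 = B 0 1 -> A 1 0 = B 1 0 -> A 1 1 = B 1 1 -> A = B.
Proof.
move=> e00 e01 e10 e11; apply/matrixP => i j.
have ord2 (k : 'I_2) : k = 0 \/ k = 1.
  by case: k => -[|[|//]] ?; [left | right]; apply/val_inj.
by case: (ord2 i) => ->; case: (ord2 j) => ->.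
Qed.

Lemma mulmx2E A B i j : (A *m B) i j = A i 0 * B 0 j + A i 1 * B 1 j.
Proof.
rewrite mxE !big_ord_recl big_ord0 addr0.
by have -> : lift ord0 ord0 = 1 :> 'I_2 by apply/val_inj.
Qed.

Lemma cexpiD a b : cexpi (a + b) = cexpi a * cexpi b.
Proof. by rewrite /cexpi cosD sinD; simpc; congr (_ +i* _); ring. Qed.

Lemma cexpi0 : cexpi 0 = 1 :> R[i].
Proof. by rewrite /cexpi cos0 sin0. Qed.

Lemma cexpi_neq0 a : cexpi a != 0.
Proof.
apply/eqP => ea0; have := cexpiD a (- a).
by rewrite subrr cexpi0 ea0 mul0r => /eqP; rewrite oner_eq0.
Qed.

Lemma cexpiN a : cexpi (- a) = (cexpi a)^-1.
Proof.
apply: (mulfI (cexpi_neq0 a)).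
by rewrite -cexpiD subrr cexpi0 mulfV ?cexpi_neq0.
Qed.

Lemma cexpiMn a k : cexpi (k%:R * a) = cexpi a ^+ k.
Proof.
elim: k => [|k IH]; first by rewrite mul0r cexpi0.
by rewrite exprS -IH -cexpiD -natr1 mulrDl mul1r addrC.
Qed.

Lemma expiZD a b : expiZ (a + b) = expiZ a *m expiZ b.
Proof.
by apply: matrix2P; rewrite mulmx2E !mxE /= ?mulr0 ?mul0r ?addr0 ?add0r ?opprD ?cexpiD.
Qed.

Lemma expiZ0 : expiZ 0 = 1 :> 'M[R[i]]_2.
Proof. by apply: matrix2P; rewrite !mxE /= ?oppr0 ?cexpi0. Qed.

Definition Vmx : 'M[R[i]]_2 :=
  \matrix_(i < 2, j < 2) if i == 0 then 1 else if j == 0 then 'i else - 'i.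

Definition rotmx a : 'M[R[i]]_2 :=
  \matrix_(i < 2, j < 2)
    if i == j then (cos a)%:C else if i == 0 then (sin a)%:C else (- sin a)%:C.

Lemma Vmx_expiZ a : Vmx *m expiZ a = rotmx a *m Vmx.
Proof.
by apply: matrix2P; rewrite !mulmx2E !mxE /= /cexpi ?cosN ?sinN; simpc;
  congr (_ +i* _); ring.
Qed.

Lemma Vmx_Wmx x : -1 <= x <= 1 -> Vmx *m Wmx x = expiZ (acos x) *m Vmx.
Proof.
move=> x_bnd; set t := acos x.
have cos_t : cos t = x by rewrite acosK // in_itv.
have sin_t : Num.sqrt (1 - x ^+ 2) = sin t by rewrite sin_acos.
apply: matrix2P; rewrite !mulmx2E !mxE /= sin_t -cos_t /cexpi ?cosN ?sinN;
  simpc; congr (_ +i* _); ring.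
Qed.

Lemma conjC_realC a : Num.conj a%:C = a%:C.
Proof. exact: conjc_real. Qed.

Lemma nlft_factor_real (g : R) (k : nat) t :
  nlft_factor g%:C k%:Z (cexpi (2 * t)) =
  expiZ (k%:R * t) *m rotmx (atan g) *m expiZ (- (k%:R * t)).
Proof.
have cos_atan_g : cos (atan g) = (Num.sqrt (1 + g ^+ 2))^-1 := cos_atan g.
have cos_neq0 : cos (atan g) != 0.
  by rewrite cos_atan_g invr_eq0 sqrtr_eq0 -ltNge ltr_pwDl ?sqr_ge0.
have sin_atan_g : sin (atan g) = g * cos (atan g).
  by rewrite -[X in _ = X * _](atanK g) /tan mulfVK.
have zk : cexpi (2 * t) ^ k%:Z = cexpi (k%:R * t) ^+ 2.
  by rewrite -exprnP -!cexpiMn; congr cexpi; ring.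
have zNk : cexpi (2 * t) ^ (- k%:Z) = (cexpi (k%:R * t) ^+ 2)^-1.
  by rewrite -invr_expz zk.
have ek_neq0 := cexpi_neq0 (k%:R * t).
apply: matrix2P; rewrite !mulmx2E !mxE /= ?conjC_realC ?zk ?zNk ?opprK ?cexpiN.
all: rewrite expr0n /= addr0.
all: rewrite -cos_atan_g sin_atan_g ?rmorphN ?rmorphM /=.
all: field; rewrite ?mulf_neq0 ?expf_neq0 //.
Qed.

Lemma nlftS (gam : int -> R[i]) m len z :
  nlft gam m len.+1 z =
  nlft gam m len z *m nlft_factor (gam (m + len%:Z)) (m + len%:Z) z.
Proof. by rewrite /nlft -[len.+1]addn1 iotaD foldl_cat add0n. Qed.

Lemma UmxS n (Psi : nat -> R) x :
  Umx n.+1 Psi x = Umx n Psi x *m (Wmx x *m expiZ (Psi n.+1)).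
Proof. by rewrite /Umx -[n.+1]addn1 iotaD foldl_cat add1n addn1. Qed.

Definition su2_shape A := A 1 0 = - Num.conj (A 0 1) /\ A 1 1 = Num.conj (A 0 0).

Lemma su2_shape1 : su2_shape 1.
Proof. by rewrite /su2_shape !mxE /= conjC0 conjC1 oppr0. Qed.

Lemma su2_shapeM A B : su2_shape A -> su2_shape B -> su2_shape (A *m B).
Proof.
move=> [A10 A11] [B10 B11]; rewrite /su2_shape !mulmx2E A10 A11 B10 B11.
by rewrite !rmorphD !rmorphM !rmorphN /= !conjCK; split; ring.
Qed.

Lemma su2_shape_expiZ a : su2_shape (expiZ a).
Proof. by rewrite /su2_shape !mxE /= /cexpi cosN sinN conjC0 oppr0. Qed.

Lemma su2_shape_rotmx a : su2_shape (rotmx a).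
Proof. by rewrite /su2_shape !mxE /= !conjC_realC rmorphN. Qed.

Lemma su2_shape_nlft (gamma : int -> R) m t :
  su2_shape (nlft (fun k => (gamma k)%:C) 0 m (cexpi (2 * t))).
Proof.
elim: m => [|m IH]; first exact: su2_shape1.
rewrite nlftS add0r nlft_factor_real.
apply: su2_shapeM IH (su2_shapeM _ (su2_shape_expiZ _)).
exact: su2_shapeM (su2_shape_expiZ _) (su2_shape_rotmx _).
Qed.

Lemma Vmx_Umx (gamma : int -> R) m x : -1 <= x <= 1 ->
  Vmx *m Umx m (fun k : nat => atan (gamma k%:Z)) x =
  nlft (fun k => (gamma k)%:C) 0 m.+1 (cexpi (2 * acos x))
    *m expiZ (m%:R * acos x) *m Vmx.
Proof.
move=> x_bnd; set t := acos x; elim: m => [|m IH].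
  by rewrite nlftS mul1mx nlft_factor_real !mul0r oppr0 expiZ0 !mulmx1 mul1mx Vmx_expiZ.
rewrite UmxS nlftS add0r nlft_factor_real mulmxA IH -!mulmxA.
rewrite (mulmxA Vmx) Vmx_Wmx // -mulmxA Vmx_expiZ -/t.
rewrite (mulmxA (expiZ (- _))) -expiZD addNr expiZ0 mul1mx.
by rewrite -[m.+1%:R]natr1 [(m%:R + 1) * t]mulrDl mul1r expiZD -mulmxA.
Qed.

Lemma Im00_Vmx_conj U P :
  Vmx *m U = P *m Vmx -> su2_shape P -> complex.Im (U 0 0) = complex.Re (P 0 1).
Proof.
move=> VU_PV [P10 P11].
have VU_PV_at i j : (Vmx *m U) i j = (P *m Vmx) i j by rewrite VU_PV.
move: (VU_PV_at 0 0) (VU_PV_at 1 0).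
rewrite !mulmx2E !mxE /= P10 P11 {VU_PV_at P10 P11 VU_PV}.
case: (U 0 0) (U 1 0) (P 0 0) (P 0 1) => [a b] [c d] [p q] [r s] /=.
simpc => -[? ?] [? ?] /=; lra.
Qed.
End QSPasNLFT.

Theorem theorem3p2 (R : realType) (n : nat) (f : R -> R) (gamma : int -> R) :
  (forall k : int, (k < 0)%R \/ (n%:Z < k)%R -> gamma k = 0) ->
  (forall theta : R, 0 <= theta <= pi ->
     complex.Re (nlft (fun k => (gamma k)%:C) 0 n.+1 (cexpi (2 * theta)) 0 1
         * cexpi (- (n%:R * theta))) = f (cos theta)) ->
  forall x : R, -1 <= x <= 1 ->
    complex.Im (Umx n (fun k : nat => atan (gamma k%:Z)) x 0 0) = f x.
Proof.
move=> _ b_eq_f x x_bnd.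
have cos_acos : cos (acos x) = x by rewrite acosK // in_itv.
rewrite -[in f x]cos_acos -b_eq_f ?acos_ge0 ?acos_lepi //.
set N := nlft _ _ _ _.
have -> : N 0 1 * cexpi (- (n%:R * acos x)) = (N *m expiZ (n%:R * acos x)) 0 1.
  by rewrite mulmx2E !mxE /= mulr0 add0r.
apply: Im00_Vmx_conj; first exact: Vmx_Umx.
exact: su2_shapeM (su2_shape_nlft _ _ _) (su2_shape_expiZ _).
Qed.
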